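(* Let $q$ be a prime power, $1\le k\le n\le m$, let $g_1,\dots,g_n\in\mathbb{F}_{q^m}$ be linearly independent over $\mathbb{F}_q$, and let $\mathcal{G}$ be the Gabidulin code of dimension $k$ with respect to $g_1,\dots,g_n$. Let $f\in\mathcal{L}_q(x,\mathbb{F}_{q^m})$ with $k\le\deg_q(f)<n$ and let $\sigma_f=(f(g_1),\dots,f(g_n))$. Then $$d_R(\sigma_f,\mathcal{G})\ge n-\deg_q(f).$$ Moreover, if $f$ is monic, then $d_R(\sigma_f,\mathcal{G})=n-\deg_q(f)$ if and only if there exist an $\mathbb{F}_q$-subspace $H\subseteq\langle g_1,\dots,g_n\rangle$ of dimension $\deg_q(f)$ and $v\in\mathcal{L}_q(x,\mathbb{F}_{q^m})$ with $v=0$ or $\deg_q(v)\le k-1$ such that $$f(x)-v(x)=\prod_{h\in H}(x-h).$$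
   Context: A $q$-linearized polynomial over $\mathbb{F}_{q^m}$ is a polynomial $L(x)=\sum_{i=0}^{d}a_ix^{q^i}$ with $a_i\in\mathbb{F}_{q^m}$; if $a_d\ne0$, $d$ is its $q$-degree $\deg_q(L)$; $L$ is monic if $a_d=1$. $\mathcal{L}_q(x,\mathbb{F}_{q^m})$ is the set of these. Rank weight: fix a basis of $\mathbb{F}_{q^m}$ over $\mathbb{F}_q$; for $\mathbf{u}=(u_1,\dots,u_n)\in\mathbb{F}_{q^m}^n$, $w_R(\mathbf{u})$ is the rank of the $m\times n$ matrix over $\mathbb{F}_q$ whose $j$-th column is the coordinate vector of $u_j$ (equivalently $\dim_{\mathbb{F}_q}\langle u_1,\dots,u_n\rangle$). $d_R(\mathbf{u},\mathbf{v})=w_R(\mathbf{u}-\mathbf{v})$ and $d_R(\mathbf{u},C)=\min_{\mathbf{c}\in C}d_R(\mathbf{u},\mathbf{c})$. The Gabidulin code of dimension $k$ with respect to $\mathbb{F}_q$-linearly independent $g_1,\dots,g_n\in\mathbb{F}_{q^m}$ is $\mathcal{G}=\{(v(g_1),\dots,v(g_n)) : v\in\mathcal{L}_q(x,\mathbb{F}_{q^m}),\ v=0\text{ or }\deg_q(v)<k\}\subseteq\mathbb{F}_{q^m}^n$. *)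

From HB Require Import structures.
From mathcomp Require Import all_boot all_order all_algebra all_field.
From Stdlib Require Import ClassicalEpsilon.
Set Implicit Arguments. Unset Strict Implicit. Unset Printing Implicit Defensive.
Import GRing.Theory.
Local Open Scope ring_scope.

(* F plays the role of F_q (q = #|F|), L that of F_{q^m} (m = \dim {:L}). *)

Definition qlin (F : finFieldType) (L : fieldExtType F) (p : {poly L}) : Prop :=
  forall i : nat, p`_i != 0 -> exists j : nat, i = (#|F| ^ j)%N.

(* q-degree: for a nonzero q-linearized p with p = ... + a_d x^(q^d), a_d <> 0,
   size p = q^d + 1, hence qdeg p = d. *)
Definition qdeg (F : finFieldType) (L : fieldExtType F) (p : {poly L}) : nat :=
  trunc_log #|F| (size p).-1.

Definition wR (F : finFieldType) (L : fieldExtType F) (n : nat) (u : 'rV[L]_n) : nat :=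
  \dim <<[seq u ord0 j | j <- enum 'I_n]>>%VS.

Definition gab (F : finFieldType) (L : fieldExtType F) (n : nat) (g : 'I_n -> L)
  (k : nat) (c : 'rV[L]_n) : Prop :=
  exists v : {poly L}, qlin v /\ (v = 0 \/ (qdeg v < k)%N) /\
    forall j : 'I_n, c ord0 j = v.[g j].

Definition pbool (P : Prop) : bool :=
  if excluded_middle_informative P then true else false.

(* rank distance from u to the set C: min of wR (u - c), c in C (0 if C empty) *)
Definition dRC (F : finFieldType) (L : fieldExtType F) (n : nat)
  (u : 'rV[L]_n) (C : 'rV[L]_n -> Prop) : nat :=
  let P := fun r : nat => pbool (exists c, C c /\ wR (u - c) = r) in
  match excluded_middle_informative (exists r, P r) with
  | left H => ex_minn H
  | right _ => 0%N
  end.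

Definition sigma (F : finFieldType) (L : fieldExtType F) (n : nat) (g : 'I_n -> L)
  (f : {poly L}) : 'rV[L]_n := \row_j f.[g j].

From HB Require Import structures.
From mathcomp Require Import all_boot all_order all_algebra all_field.
From mathcomp Require Import pgroup abelian zify.
From Stdlib Require Import ClassicalEpsilon.
Set Implicit Arguments. Unset Strict Implicit. Unset Printing Implicit Defensive.
Import GRing.Theory.
Local Open Scope ring_scope.

(* A q-linearized polynomial p acts on L as an F-linear map (the Frobenius
   x |-> x^q fixes F), so the rank weight of (p(g_1), ..., p(g_n)) is n minus
   the dimension of its kernel on U = <g_1, ..., g_n>.  That kernel is an
   F-space of q^dim roots of p, so its dimension is at most deg_q p.  A codeword
   comes from some v with deg_q v < k <= deg_q f, so f - v is q-linearized of
   q-degree deg_q f, which gives the bound.  Equality holds iff for some v the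
   kernel of f - v on U has dimension deg_q f; for monic f its q^(deg_q f)
   elements are then all the roots of f - v, i.e. f - v is the subspace
   polynomial of that kernel, and conversely a subspace polynomial of some
   H <= U of that dimension vanishes on H. *)

Section QLinearized.
Variables (F : finFieldType) (L : fieldExtType F).
Local Notation q := #|F|.

Lemma exprD_card_pow j (x y : L) : (x + y) ^+ (q ^ j) = x ^+ (q ^ j) + y ^+ (q ^ j).
Proof.
have [p _ chFp] := finPcharP F.
have chLp : p \in [pchar L] := rmorph_pchar (in_alg L) chFp.
have q_pnat : p.-nat q.
  by have /abelem_pgroup := fin_ring_pchar_abelem chFp; rewrite /pgroup cardsT.
by apply: exprDn_pchar; rewrite (eq_pnat _ (pcharf_eq chLp)) pnatX q_pnat.
Qed.

Lemma exprZ_card_pow j (a : F) (x : L) : (a *: x) ^+ (q ^ j) = a *: x ^+ (q ^ j).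
Proof.
rewrite -[a *: x]mulr_algl -[a *: x ^+ _]mulr_algl exprMn -(rmorphXn (in_alg L)) /=.
suff -> : a ^+ (q ^ j) = a by [].
by elim: j => [|j IH]; rewrite ?expr1 // expnSr exprM IH expf_card.
Qed.

Definition is_qpow (i : nat) : bool := [exists j : 'I_i.+1, i == (q ^ j)%N].

Lemma is_qpowP i : reflect (exists j, i = (q ^ j)%N) (is_qpow i).
Proof.
apply: (iffP existsP) => [[j /eqP ->]|[j ->]]; first by exists j.
have lt_j : (j < (q ^ j).+1)%N by rewrite ltnS ltnW // ltn_expl // finNzRing_gt1.
by exists (Ordinal lt_j).
Qed.

(* Unlike p.[x], this is F-linear for every p, so it carries a linear structure;
   the two agree on q-linearized p. *)
Definition qhorner (p : {poly L}) (x : L) : L :=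
  \sum_(i < size p | is_qpow i) p`_i * x ^+ i.

Lemma qhornerE p x : qlin p -> qhorner p x = p.[x].
Proof.
move=> p_qlin; rewrite horner_coef /qhorner [RHS](bigID (fun i : 'I__ => is_qpow i)) /=.
rewrite [X in _ = _ + X]big1 ?addr0 // => i /is_qpowP not_qpow.
by have [->|/p_qlin] := eqVneq p`_i 0; [rewrite mul0r | done].
Qed.

Lemma qhorner_is_linear p : linear (qhorner p).
Proof.
move=> a x y; rewrite /qhorner scaler_sumr -big_split /=.
apply: eq_bigr => i /is_qpowP [j ->].
by rewrite exprD_card_pow exprZ_card_pow mulrDr scalerAr.
Qed.

HB.instance Definition _ p :=
  @GRing.isLinear.Build F L L *:%R (qhorner p) (qhorner_is_linear p).

Definition qlfun (p : {poly L}) : 'End(L) := linfun (qhorner p).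

Lemma memv_ker_qlfun (p : {poly L}) x : qlin p -> (x \in lker (qlfun p)) = root p x.
Proof. by move=> p_qlin; rewrite memv_ker lfunE /= qhornerE. Qed.

Lemma qlinB (p r : {poly L}) : qlin p -> qlin r -> qlin (p - r).
Proof.
move=> p_qlin r_qlin i; rewrite coefB.
have [p_i0|/p_qlin //] := eqVneq p`_i 0.
by rewrite p_i0 sub0r oppr_eq0 => /r_qlin.
Qed.

Lemma size_qlin (p : {poly L}) : qlin p -> p != 0 -> size p = (q ^ qdeg p).+1.
Proof.
move=> p_qlin p_neq0.
have /p_qlin [j size_pE] : p`_(size p).-1 != 0 by rewrite -lead_coefE lead_coef_eq0.
by rewrite /qdeg size_pE trunc_expnK ?finNzRing_gt1 // -size_pE prednK ?size_poly_gt0.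
Qed.

Lemma size_lt_qdeg (p r : {poly L}) : qlin p -> qlin r -> p != 0 ->
  r = 0 \/ (qdeg r < qdeg p)%N -> (size r < size p)%N.
Proof.
move=> p_qlin r_qlin p_neq0 [->|lt_qdeg]; first by rewrite size_poly0 size_poly_gt0.
have [->|r_neq0] := eqVneq r 0; first by rewrite size_poly0 size_poly_gt0.
by rewrite !size_qlin // ltnS ltn_exp2l ?finNzRing_gt1.
Qed.

Lemma dimv_roots_le_qdeg (p : {poly L}) (U : {vspace L}) : qlin p -> p != 0 ->
  {in U, forall x, root p x} -> (\dim U <= qdeg p)%N.
Proof.
move=> p_qlin p_neq0 U_roots.
pose rs := enum [pred x : finvect_type L | x \in U].
have size_rs : size rs = (q ^ \dim U)%N by rewrite -cardE card_vspace.
have all_roots : all (root p) rs.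
  by apply/allP => x; rewrite /rs (@mem_enum (finvect_type L)) => /U_roots.
have := max_poly_roots p_neq0 all_roots (enum_uniq _).
by rewrite size_rs size_qlin // ltnS leq_exp2l ?finNzRing_gt1.
Qed.

Lemma monic_vspace_roots_prod (p : {poly L}) (K : {vspace L}) : p \is monic ->
  size p = (q ^ \dim K).+1 -> {in K, forall x, root p x} ->
  p = \prod_(h : finvect_type L | h \in K) ('X - (h : L)%:P).
Proof.
move=> p_monic size_p K_roots; rewrite -big_enum /=.
set rs := enum _; set r := \prod_(z <- rs) _.
have r_dvd_p : r %| p.
  apply: uniq_roots_dvdp; last by rewrite uniq_rootsE; exact: enum_uniq.
  by apply/allP => x; rewrite /rs (@mem_enum (finvect_type L)) => /K_roots.
have size_r : size r = size p by rewrite size_prod_XsubC /rs -cardE card_vspace.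
apply/eqP; rewrite -eqp_monic ?monic_prod_XsubC // eqp_sym.
by rewrite -dvdp_size_eqp // size_r.
Qed.

End QLinearized.

Lemma pboolE (P : Prop) : pbool P = true <-> P.
Proof. by rewrite /pbool; case: excluded_middle_informative. Qed.

Section RankDistance.
Variables (F : finFieldType) (L : fieldExtType F) (n : nat).
Variables (u : 'rV[L]_n) (C : 'rV[L]_n -> Prop).
Hypothesis C_nonempty : exists c, C c.

Lemma dRC_attained : exists c, C c /\ wR (u - c) = dRC u C.
Proof.
rewrite /dRC; case: excluded_middle_informative => [ex_w|no_w].
  by case: ex_minnP => m /pboolE.
by case: no_w; case: C_nonempty => c Cc; exists (wR (u - c)); apply/pboolE; exists c.
Qed.

Lemma dRC_le c : C c -> (dRC u C <= wR (u - c))%N.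
Proof.
move=> Cc; rewrite /dRC; case: excluded_middle_informative => [ex_w|no_w].
  by case: ex_minnP => m _; apply; apply/pboolE; exists c.
by case: no_w; exists (wR (u - c)); apply/pboolE; exists c.
Qed.

Lemma dRC_ge m : (forall c, C c -> m <= wR (u - c))%N -> (m <= dRC u C)%N.
Proof. by move=> m_le; have [c [Cc <-]] := dRC_attained; apply: m_le. Qed.

End RankDistance.

Section Evaluation.
Variables (F : finFieldType) (L : fieldExtType F) (n : nat) (g : 'I_n -> L).
Local Notation U := <<[seq g i | i <- enum 'I_n]>>%VS.

Lemma sigmaB (p r : {poly L}) : sigma g (p - r) = sigma g p - sigma g r.
Proof. by apply/rowP => j; rewrite !mxE hornerD hornerN. Qed.

Lemma gabP k c :
  gab g k c <-> exists v, [/\ qlin v, v = 0 \/ (qdeg v < k)%N & c = sigma g v].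
Proof.
split=> [[v [v_qlin [v_small cE]]]|[v [v_qlin v_small ->]]].
  by exists v; split=> //; apply/rowP => j; rewrite cE mxE.
by exists v; do 2!split=> //; move=> j; rewrite mxE.
Qed.

Lemma wR_sigma_add_dim_ker (p : {poly L}) : free [seq g i | i <- enum 'I_n] -> qlin p ->
  (wR (sigma g p) + \dim (U :&: lker (qlfun p)) = n)%N.
Proof.
move=> g_free p_qlin; rewrite /wR.
have -> : [seq sigma g p ord0 j | j <- enum 'I_n] = map (qlfun p) [seq g i | i <- enum 'I_n].
  by rewrite -[RHS]map_comp; apply: eq_map => j; rewrite /= mxE lfunE /= qhornerE.
rewrite -(limg_span (qlfun p)) addnC limg_ker_dim (eqP g_free) size_map.
by rewrite -cardE card_ord.
Qed.

End Evaluation.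

Section GabidulinDistance.
Variables (F : finFieldType) (L : fieldExtType F) (n k : nat).
Variables (g : 'I_n -> L) (f : {poly L}).
Hypotheses (g_free : free [seq g i | i <- enum 'I_n]).
Hypotheses (f_qlin : qlin f) (f_neq0 : f != 0) (k_le_qdeg : (k <= qdeg f)%N).
Local Notation U := <<[seq g i | i <- enum 'I_n]>>%VS.
Local Notation ker_on_U v := (U :&: lker (qlfun (f - v)))%VS.

Section Codeword.
Variable v : {poly L}.
Hypotheses (v_qlin : qlin v) (v_small : v = 0 \/ (qdeg v < k)%N).
Let fv_qlin : qlin (f - v) := qlinB f_qlin v_qlin.

Lemma size_codeword_lt : (size v < size f)%N.
Proof.
apply: size_lt_qdeg => //.
by case: v_small => [|lt_k]; [left | right; apply: leq_trans k_le_qdeg].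
Qed.

Lemma size_sub_codeword : size (f - v) = size f.
Proof. by rewrite size_polyDl // size_polyN size_codeword_lt. Qed.

Lemma sub_codeword_neq0 : f - v != 0.
Proof. by rewrite -size_poly_eq0 size_sub_codeword size_poly_eq0. Qed.

Lemma qdeg_sub_codeword : qdeg (f - v) = qdeg f.
Proof. by rewrite /qdeg size_sub_codeword. Qed.

Lemma root_ker_on_U : {in ker_on_U v, forall x, root (f - v) x}.
Proof. by move=> x; rewrite memv_cap memv_ker_qlfun // => /andP[]. Qed.

Lemma dim_ker_sub_codeword_le : (\dim (ker_on_U v) <= qdeg f)%N.
Proof.
rewrite -qdeg_sub_codeword.
exact: dimv_roots_le_qdeg fv_qlin sub_codeword_neq0 root_ker_on_U.
Qed.

Lemma wR_sub_codeword :
  (wR (sigma g f - sigma g v) + \dim (ker_on_U v) = n)%N.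
Proof. by rewrite -sigmaB wR_sigma_add_dim_ker. Qed.

Lemma ker_full_iff_subspace_poly : f \is monic ->
  \dim (ker_on_U v) = qdeg f <->
  exists H : {vspace L}, (H <= U)%VS /\ \dim H = qdeg f /\
    f - v = \prod_(h : finvect_type L | h \in H) ('X - (h : L)%:P).
Proof.
move=> f_monic; have fv_monic : f - v \is monic.
  by rewrite monicE lead_coefDl -?monicE // size_polyN size_codeword_lt.
split=> [dim_ker|[H [sub_H_U [dim_H fvE]]]].
  exists (ker_on_U v); split; first exact: capvSl.
  split=> //; apply: monic_vspace_roots_prod root_ker_on_U => //.
  by rewrite dim_ker size_sub_codeword size_qlin.
apply/eqP; rewrite eqn_leq dim_ker_sub_codeword_le -{1}dim_H dimvS //.
apply/subvP => h h_H; rewrite memv_cap (subvP sub_H_U) //= memv_ker_qlfun //.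
by rewrite fvE /root horner_prod (bigD1 (h : finvect_type L)) //= hornerXsubC subrr mul0r.
Qed.

End Codeword.

Lemma gab_nonempty : exists c, gab g k c.
Proof.
exists (sigma g 0); apply/gabP; exists 0.
by split=> //; [move=> i; rewrite coef0 eqxx | left].
Qed.

Lemma wR_sub_gab_ge c : gab g k c -> (n - qdeg f <= wR (sigma g f - c))%N.
Proof.
case/gabP=> v [v_qlin v_small ->].
have := wR_sub_codeword v_qlin; have := dim_ker_sub_codeword_le v_qlin v_small; lia.
Qed.

Lemma dRC_gab_ge : (n - qdeg f <= dRC (sigma g f) (gab g k))%N.
Proof. exact: (dRC_ge gab_nonempty wR_sub_gab_ge). Qed.

Lemma dRC_gab_eq_iff : (qdeg f <= n)%N ->
  dRC (sigma g f) (gab g k) = (n - qdeg f)%N <->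
  exists v, [/\ qlin v, v = 0 \/ (qdeg v < k)%N & \dim (ker_on_U v) = qdeg f].
Proof.
move=> qdeg_le_n; split=> [dist_eq|[v [v_qlin v_small dim_ker]]].
  have [_ [/gabP[v [v_qlin v_small ->]] w_eq]] := dRC_attained (sigma g f) gab_nonempty.
  exists v; split=> //; have := wR_sub_codeword v_qlin.
  have := dim_ker_sub_codeword_le v_qlin v_small; lia.
apply/eqP; rewrite eqn_leq dRC_gab_ge andbT.
have gab_v : gab g k (sigma g v) by apply/gabP; exists v.
apply: leq_trans (dRC_le (sigma g f) gab_v) _.
have := wR_sub_codeword v_qlin; lia.
Qed.

End GabidulinDistance.

Theorem theorem1 (F : finFieldType) (L : fieldExtType F) (n k : nat)
  (g : 'I_n -> L) (f : {poly L}) :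
  (1 <= k)%N -> (k <= n)%N -> (n <= \dim {:L})%N ->
  free [seq g i | i <- enum 'I_n] ->
  qlin f -> f != 0 -> (k <= qdeg f)%N -> (qdeg f < n)%N ->
  (n - qdeg f <= dRC (sigma g f) (gab g k))%N /\
  (f \is monic ->
    (dRC (sigma g f) (gab g k) = (n - qdeg f)%N <->
     exists H : {vspace L},
       (H <= <<[seq g i | i <- enum 'I_n]>>)%VS /\ \dim H = qdeg f /\
       exists v : {poly L}, qlin v /\ (v = 0 \/ (qdeg v <= k - 1)%N) /\
         f - v = \prod_(h : finvect_type L | h \in H) ('X - (h : L)%:P))).
Proof.
(* k <= n and n <= \dim {:L} are consequences of the other hypotheses. *)
move=> k_gt0 _ _ g_free f_qlin f_neq0 k_le_qdeg qdeg_lt_n.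
split=> [|f_monic]; first exact: dRC_gab_ge.
have lt_kE m : (m <= k - 1)%N = (m < k)%N by lia.
apply: iff_trans (dRC_gab_eq_iff g_free f_qlin f_neq0 k_le_qdeg (ltnW qdeg_lt_n)) _.
have subspace_polyP v (v_qlin : qlin v) (v_small : v = 0 \/ (qdeg v < k)%N) :=
  ker_full_iff_subspace_poly g f_qlin f_neq0 k_le_qdeg v_qlin v_small f_monic.
split=> [[v [v_qlin v_small]]|[H [sub_H [dim_H [v [v_qlin [v_small fvE]]]]]]].
  case/(subspace_polyP _ v_qlin v_small)=> H [sub_H [dim_H fvE]].
  by exists H; do 2!split=> //; exists v; rewrite lt_kE.
rewrite lt_kE in v_small; exists v; split=> //.
by apply/(subspace_polyP _ v_qlin v_small); exists H.
Qed.
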